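(* Let $G$ be a graph and let $\mathcal{A}$ and $\mathcal{B}$ be two distinct min-max clique coverings of $G$ that both satisfy simple intersection. If there are two distinct cliques $A,A'\in\mathcal{A}$ and two distinct cliques $B,B'\in\mathcal{B}$ such that $A\cap A'\cap B\cap B'\neq\emptyset$, then $A\cap A'=B\cap B'$.
   Context: A clique covering of a graph is a set of cliques such that every edge lies in at least one of them; $\operatorname{cc}(G)$ is its minimum size. A min-max clique covering is a clique covering of size $\operatorname{cc}(G)$ consisting of maximal cliques; it has simple intersection if no three distinct cliques of it share a vertex. *)

(* A (finite simple) graph is a symmetric irreflexive
   relation e on a finite vertex type T. *)
From mathcomp Require Import all_boot.
Set Implicit Arguments. Unset Strict Implicit. Unset Printing Implicit Defensive.

Section Cliques.
Variables (T : finType) (e : rel T).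

Definition is_clique (K : {set T}) : Prop :=
  forall x y, x \in K -> y \in K -> x != y -> e x y.

Definition is_maximal_clique (K : {set T}) : Prop :=
  is_clique K /\ forall K', is_clique K' -> K \subset K' -> K' = K.

Definition is_clique_covering (C : {set {set T}}) : Prop :=
  (forall K, K \in C -> is_clique K) /\
  (forall x y, e x y -> exists2 K, K \in C & (x \in K) && (y \in K)).

Definition is_cc (k : nat) : Prop :=
  (exists2 C, is_clique_covering C & #|C| = k) /\
  (forall C, is_clique_covering C -> k <= #|C|).

Definition is_minmax_clique_covering (C : {set {set T}}) : Prop :=
  is_clique_covering C /\ is_cc #|C| /\
  (forall K, K \in C -> is_maximal_clique K).

Definition simple_intersection (C : {set {set T}}) : Prop :=
  forall K1 K2 K3 x, K1 \in C -> K2 \in C -> K3 \in C ->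
    K1 != K2 -> K1 != K3 -> K2 != K3 ->
    ~ [&& x \in K1, x \in K2 & x \in K3].

End Cliques.

(** Let [N[x]] be the closed neighbourhood of [x]. If two cliques [A], [A']
    of a covering [C] by maximal cliques with simple intersection share [x],
    then every edge at [x] lies in [A] or [A'], so [N[x] = A :|: A'].  Hence a
    vertex [v] of [A :&: A'] satisfies [N[x] \subset N[v]]; conversely such a
    [v] extends every clique through [x], so by maximality it lies in [A] and
    in [A'].  Thus [A :&: A'] is the set of vertices whose closed neighbourhood
    contains [N[x]], which does not depend on the covering. *)
From mathcomp Require Import all_boot.
Set Implicit Arguments. Unset Strict Implicit. Unset Printing Implicit Defensive.

Section DominatingSet.
Variables (T : finType) (e : rel T).

Definition closed_nbhd (x : T) : {set T} := [set y | (y == x) || e x y].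

Definition dominators (x : T) : {set T} :=
  [set v | closed_nbhd x \subset closed_nbhd v].

Lemma clique_sub_closed_nbhd K x :
  is_clique e K -> x \in K -> K \subset closed_nbhd x.
Proof.
move=> hK xK; apply/subsetP => y yK; rewrite inE.
by case: eqVneq => [|/eqP ne_yx] //=; apply: hK; rewrite // eq_sym; apply/eqP.
Qed.

Hypothesis e_sym : symmetric e.

Lemma maximal_clique_dominators K x v :
  is_maximal_clique e K -> x \in K -> v \in dominators x -> v \in K.
Proof.
move=> [hK maxK] xK; rewrite inE => /subsetP dom_v.
have Kx := subsetP (clique_sub_closed_nbhd hK xK).
have adj_v y : y \in K -> y != v -> e v y.
  by move=> yK ne_yv; have := dom_v y (Kx y yK); rewrite inE (negPf ne_yv).
have clique_vK : is_clique e (v |: K).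
  move=> y z; rewrite !inE => /orP[/eqP->|yK] /orP[/eqP->|zK] ne_yz.
  - by rewrite eqxx in ne_yz.
  - by apply: adj_v; rewrite // eq_sym.
  - by rewrite e_sym; apply: adj_v.
  - exact: hK.
by rewrite -(maxK _ clique_vK (subsetUr _ _)) setU11.
Qed.

Variable C : {set {set T}}.
Hypotheses (coverC : is_clique_covering e C) (simpleC : simple_intersection C).

Lemma closed_nbhd_sub_setU A A' x :
  A \in C -> A' \in C -> A != A' -> x \in A -> x \in A' ->
  closed_nbhd x \subset A :|: A'.
Proof.
move=> hA hA' neAA' xA xA'; apply/subsetP => y; rewrite !inE.
case/orP => [/eqP-> | exy]; first by rewrite xA.
have [K hK /andP[xK yK]] := coverC.2 _ _ exy.
case: (eqVneq K A) => [<- | neKA]; first by rewrite yK.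
case: (eqVneq K A') => [<- | neKA']; first by rewrite yK orbT.
by case: (simpleC hK hA hA' neKA neKA' neAA' (x := x)); rewrite xK xA xA'.
Qed.

Lemma setI_covering_pair A A' x :
  (forall K, K \in C -> is_maximal_clique e K) ->
  A \in C -> A' \in C -> A != A' -> x \in A -> x \in A' ->
  A :&: A' = dominators x.
Proof.
move=> maxC hA hA' neAA' xA xA'; apply/setP => v; apply/idP/idP.
  rewrite !inE => /andP[vA vA'].
  apply: subset_trans (closed_nbhd_sub_setU hA hA' neAA' xA xA') _.
  by rewrite subUset !clique_sub_closed_nbhd //; apply: coverC.1.
by move=> dom_v; rewrite inE !(maximal_clique_dominators (maxC _ _) _ dom_v).
Qed.

End DominatingSet.

Theorem mainTheorem17 (T : finType) (e : rel T)
  (e_sym : symmetric e) (e_irr : irreflexive e)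
  (CA CB : {set {set T}}) :
  is_minmax_clique_covering e CA -> is_minmax_clique_covering e CB ->
  simple_intersection CA -> simple_intersection CB ->
  CA != CB ->
  forall A A' B B' : {set T},
    A \in CA -> A' \in CA -> A != A' ->
    B \in CB -> B' \in CB -> B != B' ->
    A :&: A' :&: B :&: B' != set0 ->
    A :&: A' = B :&: B'.
Proof.
move=> [coverA [_ maxA]] [coverB [_ maxB]] simpleA simpleB _
  A A' B B' hA hA' neAA' hB hB' neBB' /set0Pn[x].
rewrite !inE => /andP[/andP[/andP[xA xA'] xB] xB'].
rewrite (setI_covering_pair e_sym coverA simpleA maxA hA hA' neAA' xA xA').
by rewrite (setI_covering_pair e_sym coverB simpleB maxB hB hB' neBB' xB xB').
Qed.
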